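(* Let $(X,d_X)$ and $(Y,d_Y)$ be ultrametric spaces and let $d$ be a partial distance-preserving metric on $X\times Y$ such that $d_\infty\le d$ on $(X\times Y)\times(X\times Y)$. Then the following are equivalent: (i) $d$ is an ultrametric on $X\times Y$; (ii) for all compact sets $W\subseteq X$, $Z\subseteq Y$ and every $\varepsilon>0$, $$\mathcal M_\varepsilon(W\times Z)=\mathcal M_\varepsilon(W)\cdot\mathcal M_\varepsilon(Z),$$ where $\mathcal M_\varepsilon(W)$, $\mathcal M_\varepsilon(Z)$, $\mathcal M_\varepsilon(W\times Z)$ are computed in $(X,d_X)$, $(Y,d_Y)$, $(X\times Y,d)$ respectively.
   Context: $d_\infty((x_1,y_1),(x_2,y_2))=\max\{d_X(x_1,x_2),d_Y(y_1,y_2)\}$. A metric $d$ on $X\times Y$ is partial distance-preserving if $d((x_1,y),(x_2,y))=d_X(x_1,x_2)$ and $d((x,y_1),(x,y_2))=d_Y(y_1,y_2)$ for all $x,x_1,x_2\in X$, $y,y_1,y_2\in Y$. A metric $\rho$ is an ultrametric if $\rho(a,b)\le\max\{\rho(a,c),\rho(c,b)\}$. In a metric space $(M,\rho)$, a set $A$ is $\varepsilon$-distinguishable if $\rho(a,b)>\varepsilon$ for distinct $a,b\in A$, and for a totally bounded $V\subseteq M$ the packing number $\mathcal M_\varepsilon(V)$ is the maximal cardinality of an $\varepsilon$-distinguishable subset of $V$ (so $\mathcal M_\varepsilon(\emptyset)=0$). *)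

From Stdlib Require Import Reals List Classical ClassicalEpsilon.
Open Scope R_scope.

Definition is_metric {A : Type} (d : A -> A -> R) : Prop :=
  (forall a b, 0 <= d a b) /\
  (forall a b, d a b = 0 <-> a = b) /\
  (forall a b, d a b = d b a) /\
  (forall a b c, d a b <= d a c + d c b).

Definition is_ultrametric {A : Type} (d : A -> A -> R) : Prop :=
  is_metric d /\ (forall a b c, d a b <= Rmax (d a c) (d c b)).

Definition d_inf {X Y : Type} (dX : X -> X -> R) (dY : Y -> Y -> R)
  (p q : X * Y) : R := Rmax (dX (fst p) (fst q)) (dY (snd p) (snd q)).

Definition partial_distance_preserving {X Y : Type}
  (dX : X -> X -> R) (dY : Y -> Y -> R) (d : X * Y -> X * Y -> R) : Prop :=
  (forall x1 x2 y, d (x1, y) (x2, y) = dX x1 x2) /\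
  (forall x y1 y2, d (x, y1) (x, y2) = dY y1 y2).

Definition open_set {A : Type} (d : A -> A -> R) (U : A -> Prop) : Prop :=
  forall a, U a -> exists r, 0 < r /\ forall b, d a b < r -> U b.

Definition compact_set {A : Type} (d : A -> A -> R) (K : A -> Prop) : Prop :=
  forall (I : Type) (U : I -> A -> Prop),
    (forall i, open_set d (U i)) ->
    (forall a, K a -> exists i, U i a) ->
    exists l : list I, forall a, K a -> exists i, In i l /\ U i a.

Definition setX {X Y : Type} (W : X -> Prop) (Z : Y -> Prop) : X * Y -> Prop :=
  fun p => W (fst p) /\ Z (snd p).

Definition distinguishable_list {A : Type} (d : A -> A -> R) (V : A -> Prop)
  (eps : R) (l : list A) : Prop :=
  NoDup l /\ (forall a, In a l -> V a) /\
  (forall a b, In a l -> In b l -> a <> b -> eps < d a b).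

Definition is_packing_number {A : Type} (d : A -> A -> R) (V : A -> Prop)
  (eps : R) (n : nat) : Prop :=
  (exists l, distinguishable_list d V eps l /\ length l = n) /\
  (forall l, distinguishable_list d V eps l -> (length l <= n)%nat).

(* The packing number M_eps(V) (well defined, e.g., for totally bounded V;
   for V empty it is 0). *)
Definition packing_number {A : Type} (d : A -> A -> R) (V : A -> Prop)
  (eps : R) : nat :=
  epsilon (inhabits 0%nat) (fun n => is_packing_number d V eps n).

From Stdlib Require Import Reals List Classical ClassicalEpsilon FunctionalExtensionality Lra Lia.
Open Scope R_scope.

(* Both conditions turn out to be equivalent to  d = d_inf.
   - If d is an ultrametric, the strong triangle inequality through the corner
     point (x2, y1), together with partial distance preservation, gives
     d <= d_inf, hence d = d_inf.  Conversely d_inf is an ultrametric whenever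
     both factors are, so (i) holds iff d = d_inf.
   - For d = d_inf and ultrametric factors, the product of two maximal
     eps-packings is an eps-packing of W x Z; and it is maximal, because a
     maximal packing is an eps-net and, in an ultrametric space, two points
     eps-close to the same net point are eps-close to each other, so sending
     a point to its pair of nearest net points is injective on any packing.
   - If d p q > d_inf p q, pick eps strictly between; the two-point sets
     {p1, q1} and {p2, q2} have packing number 1, while {p, q} is an
     eps-packing of their product, so (ii) fails. *)

Lemma length_le_of_injective_relation {A B : Type} (l : list A) (L : list B)
  (rel : A -> B -> Prop) :
  NoDup l ->
  (forall u, In u l -> exists c, In c L /\ rel u c) ->
  (forall u v c, In u l -> In v l -> rel u c -> rel v c -> u = v) ->
  (length l <= length L)%nat.
Proof.
  intros Hnd Hex Hinj.
  destruct L as [|b0 L'].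
  - destruct l as [|u l']; simpl; [lia|].
    destruct (Hex u (or_introl eq_refl)) as [c [[] _]].
  - pose (f := fun u => epsilon (inhabits b0) (fun c => In c (b0 :: L') /\ rel u c)).
    assert (Hf : forall u, In u l -> In (f u) (b0 :: L') /\ rel u (f u)).
    { intros u Hu. apply epsilon_spec, Hex, Hu. }
    rewrite <- (length_map f l).
    apply NoDup_incl_length.
    + apply NoDup_map_NoDup_ForallPairs; [|exact Hnd].
      intros u v Hu Hv E. apply (Hinj u v (f u)); auto.
      * apply Hf, Hu.
      * rewrite E. apply Hf, Hv.
    + intros c Hc. apply in_map_iff in Hc as [u [<- Hu]]. apply Hf, Hu.
Qed.

Lemma NoDup_list_prod {A B : Type} (l : list A) (l' : list B) :
  NoDup l -> NoDup l' -> NoDup (list_prod l l').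
Proof.
  induction l as [|a l IH]; simpl; intros H1 H2; [constructor|].
  inversion H1; subst. apply NoDup_app.
  - apply NoDup_map_NoDup_ForallPairs; [|exact H2].
    intros u v _ _ E. now inversion E.
  - apply IH; assumption.
  - intros [x y] Hin Hin'. apply in_map_iff in Hin as [z [E _]].
    inversion E; subst. apply in_prod_iff in Hin'. tauto.
Qed.

Lemma bounded_nat_set_has_max (P : nat -> Prop) (B : nat) :
  P 0%nat -> (forall n, P n -> (n <= B)%nat) ->
  exists n, P n /\ forall m, P m -> (m <= n)%nat.
Proof.
  revert P. induction B as [|B IH]; intros P H0 HB.
  - exists 0%nat. split; assumption.
  - destruct (classic (P (S B))) as [HS|HS].
    + exists (S B). split; assumption.
    + apply IH; [exact H0|]. intros n Hn. specialize (HB n Hn).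
      destruct (Nat.eq_dec n (S B)); [subst; contradiction|lia].
Qed.

Section Packing.

Context {A : Type} (dA : A -> A -> R).

Lemma packing_number_spec (V : A -> Prop) (eps : R) (n : nat) :
  is_packing_number dA V eps n -> packing_number dA V eps = n.
Proof.
  intros Hn. unfold packing_number.
  destruct (epsilon_spec (inhabits 0%nat) (fun n => is_packing_number dA V eps n)
    (ex_intro _ n Hn)) as [[l' [Hl' Hlen']] Hmax'].
  destruct Hn as [[l [Hl Hlen]] Hmax].
  apply Hmax in Hl'. apply Hmax' in Hl. lia.
Qed.

Lemma packing_number_exists_of_bound (V : A -> Prop) (eps : R) (B : nat) :
  (forall l, distinguishable_list dA V eps l -> (length l <= B)%nat) ->
  exists n, is_packing_number dA V eps n.
Proof.
  intros HB.
  destruct (bounded_nat_set_has_max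
    (fun n => exists l, distinguishable_list dA V eps l /\ length l = n) B)
    as [n [Hn Hmax]].
  - exists nil. repeat split; [constructor| |]; simpl; tauto.
  - intros n [l [Hl <-]]. apply HB, Hl.
  - exists n. split; [exact Hn|]. intros l Hl. apply Hmax. eauto.
Qed.

Lemma packing_number_small_diameter (V : A -> Prop) (eps : R) (a0 : A) :
  V a0 -> (forall a b, V a -> V b -> dA a b <= eps) ->
  is_packing_number dA V eps 1.
Proof.
  intros Ha0 Hdiam. split.
  - exists (a0 :: nil). split; [|reflexivity]. repeat split.
    + constructor; [simpl; tauto|constructor].
    + intros a [<-|[]]; exact Ha0.
    + intros a b [<-|[]] [<-|[]] Hne; now exfalso.
  - intros l [Hnd [Hin Hd]]. destruct l as [|a [|b l']]; simpl; try lia. exfalso.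
    inversion Hnd as [|? ? Hab]; subst.
    assert (a <> b) as Hne by (intros ->; apply Hab; simpl; auto).
    specialize (Hd a b (or_introl eq_refl) (or_intror (or_introl eq_refl)) Hne).
    specialize (Hdiam a b (Hin a (or_introl eq_refl))
                          (Hin b (or_intror (or_introl eq_refl)))).
    lra.
Qed.

Lemma finite_set_compact (L : list A) (V : A -> Prop) :
  (forall a, V a -> In a L) -> compact_set dA V.
Proof.
  unfold compact_set. revert V.
  induction L as [|c L IH]; intros V HV I U HU Hcov.
  - exists nil. intros a Ha. destruct (HV a Ha).
  - destruct (IH (fun a => V a /\ a <> c)) with (U := U) as [l Hl].
    + intros a [Ha Hne]. destruct (HV a Ha) as [->|]; [contradiction|assumption].
    + exact HU.
    + intros a [Ha _]. apply Hcov, Ha.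
    + destruct (classic (V c)) as [Hc|Hc].
      * destruct (Hcov c Hc) as [i Hi]. exists (i :: l). intros a Ha.
        destruct (classic (a = c)) as [->|Hne].
        -- exists i. simpl; auto.
        -- destruct (Hl a (conj Ha Hne)) as [j [Hj HUj]]. exists j. simpl; auto.
      * exists l. intros a Ha. apply Hl. split; [exact Ha|]. intros ->. contradiction.
Qed.

Hypothesis hm : is_metric dA.

(* In a compact set, eps-distinguishable lists have bounded length: the open
   eps/2-balls cover it, and each contains at most one point of the list. *)
Lemma compact_distinguishable_bound (V : A -> Prop) (eps : R) :
  0 < eps -> compact_set dA V ->
  exists B, forall l, distinguishable_list dA V eps l -> (length l <= B)%nat.
Proof.
  intros He HK. destruct hm as [_ [Hz [Hs Ht]]].
  destruct (HK A (fun a b => dA a b < eps / 2)) as [L HL].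
  - intros a b Hb. exists (eps / 2 - dA a b). split; [lra|].
    intros c Hc. pose proof (Ht a c b). lra.
  - intros a _. exists a. rewrite (proj2 (Hz a a) eq_refl). lra.
  - exists (length L). intros l [Hnd [Hin Hd]].
    apply (length_le_of_injective_relation l L (fun u c => dA c u < eps / 2));
      [exact Hnd|intros u Hu; apply HL, Hin, Hu|].
    intros u v c Hu Hv Hcu Hcv. apply NNPP; intro Hne.
    pose proof (Hd u v Hu Hv Hne). pose proof (Ht u v c).
    rewrite (Hs u c) in *. lra.
Qed.

Lemma compact_packing_number_exists (V : A -> Prop) (eps : R) :
  0 < eps -> compact_set dA V -> exists n, is_packing_number dA V eps n.
Proof.
  intros He HK. destruct (compact_distinguishable_bound V eps He HK) as [B HB].
  exact (packing_number_exists_of_bound V eps B HB).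
Qed.

Lemma distinguishable_le_packing_number (V : A -> Prop) (eps : R) l :
  0 < eps -> compact_set dA V -> distinguishable_list dA V eps l ->
  (length l <= packing_number dA V eps)%nat.
Proof.
  intros He HK Hl. destruct (compact_packing_number_exists V eps He HK) as [n Hn].
  rewrite (packing_number_spec V eps n Hn). apply Hn, Hl.
Qed.

(* A maximal eps-packing is an eps-net: otherwise a far point could be added. *)
Lemma maximal_packing_is_net (V : A -> Prop) (eps : R) (n : nat) (l : list A) :
  0 < eps -> is_packing_number dA V eps n -> distinguishable_list dA V eps l ->
  length l = n -> forall w, V w -> exists a, In a l /\ dA w a <= eps.
Proof.
  intros He [_ Hmax] Hl Hlen w Hw. apply NNPP; intro Hno.
  assert (Hfar : forall a, In a l -> eps < dA w a).
  { intros a Ha. apply Rnot_le_lt. intro. apply Hno. eauto. }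
  destruct hm as [_ [Hz [Hs _]]]. destruct Hl as [Hnd [Hin Hd]].
  assert (Hext : distinguishable_list dA V eps (w :: l)).
  { split; [|split].
    - constructor; [|exact Hnd]. intro Hw'. specialize (Hfar w Hw').
      rewrite (proj2 (Hz w w) eq_refl) in Hfar. lra.
    - intros a [<-|Ha]; auto.
    - intros a b [<-|Ha] [<-|Hb] Hne; try (exfalso; now apply Hne); auto.
      rewrite Hs. auto. }
  apply Hmax in Hext. simpl in Hext. lia.
Qed.

Lemma pair_packing_number (x y : A) (eps : R) :
  dA x y <= eps -> 0 <= eps ->
  packing_number dA (fun z => z = x \/ z = y) eps = 1%nat.
Proof.
  intros Hxy He. destruct hm as [_ [Hz [Hs _]]].
  apply packing_number_spec, packing_number_small_diameter with x; [now left|].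
  intros a b [-> | ->] [-> | ->];
    rewrite ?(proj2 (Hz _ _) eq_refl), ?(Hs y x); lra.
Qed.

Lemma pair_distinguishable (V : A -> Prop) (eps : R) (a b : A) :
  0 < eps -> V a -> V b -> eps < dA a b ->
  distinguishable_list dA V eps (a :: b :: nil).
Proof.
  intros He Ha Hb Hab. destruct hm as [_ [Hz [Hs _]]].
  assert (a <> b) as Hne by (intros ->; rewrite (proj2 (Hz b b) eq_refl) in Hab; lra).
  split; [|split].
  - constructor; [simpl; intuition|constructor; [simpl; tauto|constructor]].
  - intros c [<-|[<-|[]]]; assumption.
  - intros c e [<-|[<-|[]]] [<-|[<-|[]]] Hce; try (exfalso; now apply Hce).
    + exact Hab.
    + rewrite Hs. exact Hab.
Qed.

End Packing.

Lemma ultrametric_common_center {A : Type} (dA : A -> A -> R) (u v c : A) (eps : R) :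
  is_ultrametric dA -> dA u c <= eps -> dA v c <= eps -> dA u v <= eps.
Proof.
  intros [[_ [_ [Hs _]]] Hult] Hu Hv.
  eapply Rle_trans; [apply (Hult u v c)|]. apply Rmax_lub; [exact Hu|].
  rewrite Hs. exact Hv.
Qed.

Section Product.

Context {X Y : Type} (dX : X -> X -> R) (dY : Y -> Y -> R).

Lemma d_inf_strong_triangle :
  (forall a b c, dX a b <= Rmax (dX a c) (dX c b)) ->
  (forall a b c, dY a b <= Rmax (dY a c) (dY c b)) ->
  forall p q r, d_inf dX dY p q <= Rmax (d_inf dX dY p r) (d_inf dX dY r q).
Proof.
  intros HX HY p q r. unfold d_inf.
  pose proof (Rmax_l (dX (fst p) (fst r)) (dY (snd p) (snd r))).
  pose proof (Rmax_r (dX (fst p) (fst r)) (dY (snd p) (snd r))).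
  pose proof (Rmax_l (dX (fst r) (fst q)) (dY (snd r) (snd q))).
  pose proof (Rmax_r (dX (fst r) (fst q)) (dY (snd r) (snd q))).
  apply Rmax_lub.
  - eapply Rle_trans; [apply (HX _ _ (fst r))|].
    apply Rmax_lub; eapply Rle_trans; eauto; [apply Rmax_l|apply Rmax_r].
  - eapply Rle_trans; [apply (HY _ _ (snd r))|].
    apply Rmax_lub; eapply Rle_trans; eauto; [apply Rmax_l|apply Rmax_r].
Qed.

(* A partial distance-preserving metric above d_inf satisfying the strong
   triangle inequality is d_inf: go through the corner point (x2, y1). *)
Lemma strong_triangle_pdp_is_d_inf (d : X * Y -> X * Y -> R) :
  partial_distance_preserving dX dY d ->
  (forall p q, d_inf dX dY p q <= d p q) ->
  (forall a b c, d a b <= Rmax (d a c) (d c b)) ->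
  forall p q, d p q = d_inf dX dY p q.
Proof.
  intros [Hrow Hcol] Hinf Hult [p1 p2] [q1 q2].
  apply Rle_antisym; [|apply Hinf].
  eapply Rle_trans; [apply (Hult _ _ (q1, p2))|].
  rewrite Hrow, Hcol. apply Rle_refl.
Qed.

Lemma product_distinguishable (W : X -> Prop) (Z : Y -> Prop) (eps : R) lW lZ :
  distinguishable_list dX W eps lW -> distinguishable_list dY Z eps lZ ->
  distinguishable_list (d_inf dX dY) (setX W Z) eps (list_prod lW lZ).
Proof.
  intros [HndW [HinW HdW]] [HndZ [HinZ HdZ]]. split; [|split].
  - apply NoDup_list_prod; assumption.
  - intros [a b] Hab. apply in_prod_iff in Hab. split; simpl; [apply HinW|apply HinZ]; tauto.
  - intros [a1 b1] [a2 b2] H1 H2 Hne. apply in_prod_iff in H1, H2. unfold d_inf; simpl.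
    destruct (classic (a1 = a2)) as [<-|Ha].
    + assert (b1 <> b2) by (intros <-; auto).
      apply Rlt_le_trans with (dY b1 b2); [apply HdZ; tauto|apply Rmax_r].
    + apply Rlt_le_trans with (dX a1 a2); [apply HdW; tauto|apply Rmax_l].
Qed.

(* For ultrametric factors, the d_inf-packing number of a product is the
   product of the packing numbers: maximal packings multiply, and the
   nearest-net-point map is injective on any packing of the product. *)
Lemma d_inf_packing_number_product (W : X -> Prop) (Z : Y -> Prop) (eps : R) nW nZ :
  is_ultrametric dX -> is_ultrametric dY -> 0 < eps ->
  is_packing_number dX W eps nW -> is_packing_number dY Z eps nZ ->
  is_packing_number (d_inf dX dY) (setX W Z) eps (nW * nZ).
Proof.
  intros hX hY He HnW HnZ.
  pose proof HnW as [[lW [HlW HlenW]] _].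
  pose proof HnZ as [[lZ [HlZ HlenZ]] _].
  split.
  - exists (list_prod lW lZ). split; [apply product_distinguishable; assumption|].
    rewrite length_prod, HlenW, HlenZ. reflexivity.
  - intros l [Hnd [Hin Hd]]. rewrite <- HlenW, <- HlenZ, <- length_prod.
    apply (length_le_of_injective_relation l (list_prod lW lZ)
      (fun p ab => dX (fst p) (fst ab) <= eps /\ dY (snd p) (snd ab) <= eps));
      [exact Hnd| |].
    + intros u Hu. destruct (Hin u Hu) as [Hu1 Hu2].
      destruct (maximal_packing_is_net dX (proj1 hX) W eps nW lW He HnW HlW HlenW _ Hu1)
        as [a [Ha Hda]].
      destruct (maximal_packing_is_net dY (proj1 hY) Z eps nZ lZ He HnZ HlZ HlenZ _ Hu2)
        as [b [Hb Hdb]].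
      exists (a, b). split; [apply in_prod; assumption|]. simpl; auto.
    + intros u v [a b] Hu Hv [Hu1 Hu2] [Hv1 Hv2]. simpl in *.
      apply NNPP; intro Hne. specialize (Hd u v Hu Hv Hne). unfold d_inf in Hd.
      pose proof (ultrametric_common_center dX _ _ _ _ hX Hu1 Hv1) as HuvX.
      pose proof (ultrametric_common_center dY _ _ _ _ hY Hu2 Hv2) as HuvY.
      pose proof (Rmax_lub _ _ _ HuvX HuvY). lra.
Qed.

(* If the packing numbers of products of compact sets are multiplicative,
   then d = d_inf: otherwise some pair of two-point sets violates it. *)
Lemma multiplicative_packing_forces_d_inf (d : X * Y -> X * Y -> R) :
  is_metric dX -> is_metric dY -> is_metric d ->
  (forall p q, d_inf dX dY p q <= d p q) ->
  (forall (W : X -> Prop) (Z : Y -> Prop), compact_set dX W -> compact_set dY Z ->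
     forall eps, 0 < eps ->
     packing_number d (setX W Z) eps =
       (packing_number dX W eps * packing_number dY Z eps)%nat) ->
  forall p q, d p q = d_inf dX dY p q.
Proof.
  intros hXm hYm hd Hinf Hmul [p1 p2] [q1 q2].
  destruct (Hinf (p1, p2) (q1, q2)) as [Hlt|]; [exfalso|congruence].
  set (m := d_inf dX dY (p1, p2) (q1, q2)) in *.
  set (D := d (p1, p2) (q1, q2)) in *.
  assert (HmX : dX p1 q1 <= m) by apply Rmax_l.
  assert (HmY : dY p2 q2 <= m) by apply Rmax_r.
  pose proof (proj1 hXm p1 q1) as HmX_nonneg.
  set (eps := (m + D) / 2).
  assert (He : 0 < eps /\ m < eps /\ eps < D) by (unfold eps; lra).
  clearbody eps. destruct He as [He0 [He1 He2]].
  set (W := fun z => z = p1 \/ z = q1). set (Z := fun z => z = p2 \/ z = q2).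
  assert (HWZ : forall p, setX W Z p ->
            In p ((p1, p2) :: (p1, q2) :: (q1, p2) :: (q1, q2) :: nil)).
  { intros [a b] [Ha Hb]. simpl in Ha, Hb.
    destruct Ha as [-> | ->], Hb as [-> | ->]; simpl; tauto. }
  assert (HWc : compact_set dX W).
  { apply finite_set_compact with (p1 :: q1 :: nil). intros a [-> | ->]; simpl; tauto. }
  assert (HZc : compact_set dY Z).
  { apply finite_set_compact with (p2 :: q2 :: nil). intros a [-> | ->]; simpl; tauto. }
  specialize (Hmul W Z HWc HZc eps He0).
  assert (HW1 : packing_number dX W eps = 1%nat)
    by (apply (pair_packing_number dX hXm); lra).
  assert (HZ1 : packing_number dY Z eps = 1%nat)
    by (apply (pair_packing_number dY hYm); lra).
  rewrite HW1, HZ1 in Hmul.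
  assert (Hpair : (2 <= packing_number d (setX W Z) eps)%nat).
  { apply (distinguishable_le_packing_number d hd _ _ ((p1, p2) :: (q1, q2) :: nil) He0).
    - exact (finite_set_compact d _ _ HWZ).
    - apply pair_distinguishable; [exact hd|exact He0| | |exact He2];
        split; unfold W, Z; simpl; tauto. }
  rewrite Hmul in Hpair. simpl in Hpair. lia.
Qed.

End Product.

Theorem theorem4p1 (X Y : Type) (dX : X -> X -> R) (dY : Y -> Y -> R)
  (d : X * Y -> X * Y -> R)
  (hX : is_ultrametric dX) (hY : is_ultrametric dY)
  (hd : is_metric d) (hpdp : partial_distance_preserving dX dY d)
  (hinf : forall p q, d_inf dX dY p q <= d p q) :
  is_ultrametric d <->
  (forall (W : X -> Prop) (Z : Y -> Prop), compact_set dX W -> compact_set dY Z ->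
     forall eps, 0 < eps ->
     packing_number d (setX W Z) eps =
       (packing_number dX W eps * packing_number dY Z eps)%nat).
Proof.
  split.
  - intros [_ Hult] W Z HW HZ eps He.
    assert (Hd : d = d_inf dX dY).
    { do 2 (apply functional_extensionality; intro).
      apply strong_triangle_pdp_is_d_inf; assumption. }
    subst d.
    destruct (compact_packing_number_exists dX (proj1 hX) W eps He HW) as [nW HnW].
    destruct (compact_packing_number_exists dY (proj1 hY) Z eps He HZ) as [nZ HnZ].
    rewrite (packing_number_spec dX W eps nW HnW), (packing_number_spec dY Z eps nZ HnZ).
    apply packing_number_spec, d_inf_packing_number_product; assumption.
  - intros Hmul. split; [exact hd|]. intros a b c.
    rewrite !(multiplicative_packing_forces_d_inf dX dY d (proj1 hX) (proj1 hY) hd hinf Hmul).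
    apply d_inf_strong_triangle; [apply hX|apply hY].
Qed.
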